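(* There is no finite group that has precisely two cyclic subgroups of order $6$. *)

From mathcomp Require Import all_boot all_fingroup all_solvable.
Set Implicit Arguments.
Unset Strict Implicit.
Unset Printing Implicit Defensive.

(* Suppose <[x]> and <[y]> are the only cyclic subgroups of order 6 of G.
   Conjugation by an element of one of them permutes the two and fixes that
   one, so each normalizes the other.  Hence y centralizes the involution
   t = x^3 of <[x]>, x centralizes s = y^3, and x^2 commutes with y^2, as an
   automorphism of order 3 of a group of order 3 is trivial.  Commuting
   elements of orders 3 and 2 generate a cyclic group of order 6, i.e. <[x]>
   or <[y]>.  If t = s, applying this to x^2 y^2 and t forces y into <[x]> or
   x into <[y]>; if t <> s, applying it to x^2 and t s puts a second
   involution into <[x]> or <[y]>. *)
From mathcomp Require Import all_boot all_fingroup all_solvable.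

Set Implicit Arguments.
Unset Strict Implicit.
Unset Printing Implicit Defensive.

Local Open Scope group_scope.

Section CyclicFacts.

Variable gT : finGroupType.
Implicit Types (K : {group gT}) (a b c d z : gT).

Lemma mem_expg2_expg3 K z : z ^+ 2 \in K -> z ^+ 3 \in K -> z \in K.
Proof.
move=> z2K z3K; have -> : z = z ^+ 3 * (z ^+ 2)^-1 by rewrite (expgS z 2) mulgK.
by rewrite groupM ?groupV.
Qed.

Lemma cyclic_involution_uniq K c d :
  cyclic K -> c \in K -> d \in K -> #[c] = 2 -> #[d] = 2 -> c = d.
Proof.
move=> cycK Kc Kd oc od.
have /eqP eq_cd : <[c]> :==: <[d]>.
  by rewrite (eq_subG_cyclic cycK) ?cycle_subG // -!orderE oc od.
have : d \in <[c]> by rewrite eq_cd cycle_id.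
rewrite cycle2g // !inE => /orP[/eqP d1 | /eqP //].
by move: od; rewrite d1 order1.
Qed.

Lemma norm_cyclic_involution_cent K (H : {set gT}) c :
  cyclic K -> c \in K -> #[c] = 2 -> H \subset 'N(K) -> H \subset 'C[c].
Proof.
move=> cycK Kc oc nKH; apply/subsetP => h Hh.
apply/cent1P/commute_sym/commgP/conjg_fixP.
apply: (cyclic_involution_uniq cycK) => //; last by rewrite orderJ.
by rewrite memJ_norm // (subsetP nKH).
Qed.

(* a ^ b is a or a ^+ 2; in the latter case b ^+ 3 = 1 would conjugate a to
   a ^+ 8 = a ^+ 2. *)
Lemma norm_cyclic_order3_commute K a b :
  cyclic K -> a \in K -> #[a] = 3 -> b \in 'N(K) -> #[b] = 3 -> commute a b.
Proof.
move=> cycK Ka oa nKb ob; apply/commgP/conjg_fixP.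
have /eqP eq_aJ : <[a ^ b]> :==: <[a]>.
  by rewrite (eq_subG_cyclic cycK) ?cycle_subG ?memJ_norm // -!orderE orderJ.
have /cyclePmin[k] : a ^ b \in <[a]> by rewrite -eq_aJ cycle_id.
rewrite oa; case: k => [|[|[|//]]] _ /= aJ //.
- by move: oa; rewrite -(orderJ a b) aJ order1.
- have : a ^ (b ^+ 3) = a ^+ 8.
    rewrite (expgSr b 2) (expgSr b 1) expg1 !conjgM.
    by rewrite aJ !conjXg aJ conjXg aJ -!expgM.
  have b3 : b ^+ 3 = 1 by rewrite -ob expg_order.
  rewrite b3 conjg1 => /eqP.
  by rewrite -{1}(expg1 a) eq_expg_mod_order oa.
Qed.

End CyclicFacts.

Section TwoCyclicSubgroupsOfOrder6.

Variables (gT : finGroupType) (G : {group gT}) (x y : gT).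
Hypotheses (Gx : x \in G) (Gy : y \in G) (ox : #[x] = 6) (oy : #[y] = 6).
Hypothesis neq_xy : <[x]> != <[y]>.
Hypothesis only2 :
  forall z, z \in G -> #[z] = 6 -> <[z]> = <[x]> \/ <[z]> = <[y]>.

Lemma y_notin_cycle_x : y \notin <[x]>.
Proof.
apply: contra neq_xy => xy; rewrite eq_sym eqEcard cycle_subG xy.
by rewrite -!orderE ox oy.
Qed.

Lemma x_notin_cycle_y : x \notin <[y]>.
Proof.
apply: contra neq_xy => yx; rewrite eqEcard cycle_subG yx.
by rewrite -!orderE ox oy.
Qed.

Lemma norm_cycle_y_x : <[y]> \subset 'N(<[x]>).
Proof.
rewrite norms_cycle; have Gxy : x ^ y \in G by rewrite groupJ.
have [<- | def] := only2 Gxy (etrans (orderJ x y) ox); first exact: cycle_id.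
have : x ^ y \in <[y]> by rewrite -def cycle_id.
by rewrite groupJr ?cycle_id // (negPf x_notin_cycle_y).
Qed.

Lemma norm_cycle_x_y : <[x]> \subset 'N(<[y]>).
Proof.
rewrite norms_cycle; have Gyx : y ^ x \in G by rewrite groupJ.
have [def | <-] := only2 Gyx (etrans (orderJ y x) oy); last exact: cycle_id.
have : y ^ x \in <[x]> by rewrite -def cycle_id.
by rewrite groupJr ?cycle_id // (negPf y_notin_cycle_x).
Qed.

Lemma commute_order3_order2_cover a b :
  a \in G -> b \in G -> commute a b -> #[a] = 3 -> #[b] = 2 ->
  (a \in <[x]> /\ b \in <[x]>) \/ (a \in <[y]> /\ b \in <[y]>).
Proof.
move=> Ga Gb cab oa ob; have co_ab : coprime #[a] #[b] by rewrite oa ob.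
have ab_a : a \in <[a * b]> by rewrite -cycle_subG cycleMsub.
have ab_b : b \in <[a * b]>.
  by rewrite cab -cycle_subG cycleMsub 1?coprime_sym //; apply: commute_sym.
have oab : #[a * b] = 6 by rewrite orderM // oa ob.
by case: (only2 (groupM Ga Gb) oab) => <-; [left | right].
Qed.

Let t := x ^+ 3.
Let s := y ^+ 3.
Let a := x ^+ 2.
Let b := y ^+ 2.

Let ot : #[t] = 2. Proof. by rewrite orderXgcd ox. Qed.
Let os : #[s] = 2. Proof. by rewrite orderXgcd oy. Qed.
Let oa : #[a] = 3. Proof. by rewrite orderXgcd ox. Qed.
Let ob : #[b] = 3. Proof. by rewrite orderXgcd oy. Qed.
Let xt : t \in <[x]>. Proof. exact: mem_cycle. Qed.
Let xa : a \in <[x]>. Proof. exact: mem_cycle. Qed.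
Let yb : b \in <[y]>. Proof. exact: mem_cycle. Qed.
Let ys : s \in <[y]>. Proof. exact: mem_cycle. Qed.
Let Gt : t \in G. Proof. exact: groupX. Qed.
Let Gs : s \in G. Proof. exact: groupX. Qed.
Let Ga : a \in G. Proof. exact: groupX. Qed.
Let Gb : b \in G. Proof. exact: groupX. Qed.

Lemma shared_involution_absurd : t = s -> False.
Proof.
move=> ts; have cab : commute a b.
  apply: (norm_cyclic_order3_commute (cycle_cyclic x)) => //.
  exact: subsetP norm_cycle_y_x b yb.
have b_notin : b \notin <[x]>.
  apply: contra y_notin_cycle_x => xb.
  by apply: (mem_expg2_expg3 xb); rewrite -/s -ts.
have a_notin : a \notin <[y]>.
  apply: contra x_notin_cycle_y => ya.
  by apply: (mem_expg2_expg3 ya); rewrite -/t ts.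
have oab : #[a * b] = 3.
  apply: nt_prime_order => //.
    by rewrite expgMn // -{1}oa -ob !expg_order mulg1.
  apply: contraNneq b_notin => /eqP; rewrite -eq_invg_mul => /eqP <-.
  by rewrite groupV.
have ctab : commute t (a * b).
  by apply: commuteM; [apply: commuteX2 | rewrite ts; apply: commuteX2].
have [[xab _] | [yab _]] :=
  commute_order3_order2_cover (groupM Ga Gb) Gt (commute_sym ctab) oab ot.
- by move: b_notin; rewrite -(groupMl b xa) xab.
- by move: a_notin; rewrite -(groupMr a yb) yab.
Qed.

Lemma distinct_involutions_absurd : t != s -> False.
Proof.
move=> nts; have s_notin : s \notin <[x]>.
  apply: contra nts => xs; apply/eqP.
  exact: (cyclic_involution_uniq (cycle_cyclic x)).
have t_notin : t \notin <[y]>.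
  apply: contra nts => yt; apply/eqP.
  exact: (cyclic_involution_uniq (cycle_cyclic y)).
have cts : commute t s.
  apply/cent1P; rewrite cent1C.
  have cyt := norm_cyclic_involution_cent (cycle_cyclic x) xt ot norm_cycle_y_x.
  exact: subsetP cyt s ys.
have cas : commute a s.
  apply/cent1P.
  have cxs := norm_cyclic_involution_cent (cycle_cyclic y) ys os norm_cycle_x_y.
  exact: subsetP cxs a xa.
have ots : #[t * s] = 2.
  apply: nt_prime_order => //.
    by rewrite expgMn // -{1}ot -os !expg_order mulg1.
  apply: contraNneq s_notin => /eqP; rewrite -eq_invg_mul => /eqP <-.
  by rewrite groupV.
have cats : commute a (t * s) by apply: commuteM; first apply: commuteX2.
have [[_ xts] | [_ yts]] :=
  commute_order3_order2_cover Ga (groupM Gt Gs) cats oa ots.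
- by move: s_notin; rewrite -(groupMl s xt) xts.
- by move: t_notin; rewrite -(groupMr t ys) yts.
Qed.

Theorem two_cycles_order6_absurd : False.
Proof.
case: (eqVneq t s); first exact: shared_involution_absurd.
exact: distinct_involutions_absurd.
Qed.

End TwoCyclicSubgroupsOfOrder6.

Theorem lemma3p1 (gT : finGroupType) (G : {group gT}) :
  #|[set H : {group gT} | [&& H \subset G, cyclic H & #|H| == 6]]| != 2.
Proof.
apply/negP => /cards2P[H1 [H2 [neqH defS]]].
have memS (H : {group gT}) :
    [&& H \subset G, cyclic H & #|H| == 6] = (H \in [set H1; H2]).
  by rewrite -defS inE.
move: (set21 H1 H2) (set22 H1 H2); rewrite -!memS.
case/and3P=> sH1G /cyclicP[x defH1] /eqP oH1.
case/and3P=> sH2G /cyclicP[y defH2] /eqP oH2.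
apply: (@two_cycles_order6_absurd gT G x y).
- by rewrite -cycle_subG -defH1.
- by rewrite -cycle_subG -defH2.
- by rewrite orderE -defH1.
- by rewrite orderE -defH2.
- by rewrite -defH1 -defH2 val_eqE.
- move=> z Gz oz.
  have : <[z]>%G \in [set H1; H2].
    by rewrite -memS cycle_subG Gz cycle_cyclic -orderE oz /=.
  by rewrite !inE => /orP[] /eqP /(congr1 val) /= ->; [left | right].
Qed.
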